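(* Let $S$ be a semigroup. Every proper interior ideal of $S$ is minimal if and only if any two distinct proper interior ideals of $S$ have empty intersection.
   Context: A subsemigroup $I$ of $S$ (non-empty with $II\subseteq I$) is an interior ideal if $SIS\subseteq I$; it is proper if $I\neq S$. An interior ideal $I$ is minimal if the only interior ideal of $S$ contained in $I$ is $I$ itself. *)

(* an arbitrary (possibly infinite) semigroup given by a carrier
   type T and an associative operation; subsets are predicates T -> Prop,
   set equality is extensional equality of predicates. *)

Definition associative_op {T : Type} (op : T -> T -> T) : Prop :=
  forall x y z, op x (op y z) = op (op x y) z.

Definition subset {T : Type} (A B : T -> Prop) : Prop := forall x, A x -> B x.

Definition set_eq {T : Type} (A B : T -> Prop) : Prop := forall x, A x <-> B x.

Definition subsemigroup {T : Type} (op : T -> T -> T) (I : T -> Prop) : Prop :=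
  (exists x, I x) /\ (forall x y, I x -> I y -> I (op x y)).

Definition interior_ideal {T : Type} (op : T -> T -> T) (I : T -> Prop) : Prop :=
  subsemigroup op I /\ (forall s x t, I x -> I (op (op s x) t)).

Definition proper {T : Type} (I : T -> Prop) : Prop := ~ set_eq I (fun _ => True).

Definition minimal_interior_ideal {T : Type} (op : T -> T -> T) (I : T -> Prop) : Prop :=
  interior_ideal op I /\
  (forall J, interior_ideal op J -> subset J I -> set_eq J I).

From Stdlib Require Import Classical.

(** Two interior ideals with a common point meet in an interior ideal.
    If all proper interior ideals are minimal, this intersection equals both,
    so two distinct proper interior ideals cannot meet.  Conversely, an
    interior ideal inside a proper one is proper and meets it, hence equals it. *)

Lemma set_eq_sym {T : Type} (A B : T -> Prop) : set_eq A B -> set_eq B A.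
Proof. intros E x. symmetry. apply E. Qed.

Lemma set_eq_trans {T : Type} (A B C : T -> Prop) :
  set_eq A B -> set_eq B C -> set_eq A C.
Proof. intros EAB EBC x. etransitivity; [apply EAB | apply EBC]. Qed.

Lemma interior_ideal_setI {T : Type} (op : T -> T -> T) (I J : T -> Prop) (x : T) :
  interior_ideal op I -> interior_ideal op J -> I x -> J x ->
  interior_ideal op (fun y => I y /\ J y).
Proof.
  intros [[_ HIclosed] HIabs] [[_ HJclosed] HJabs] Ix Jx.
  split; [split |].
  - exists x. split; assumption.
  - intros a b [Ia Ja] [Ib Jb]. split; auto.
  - intros s a t [Ia Ja]. split; auto.
Qed.

Lemma proper_subset {T : Type} (I J : T -> Prop) :
  subset J I -> proper I -> proper J.
Proof.
  intros JI PI EJ. apply PI. intro y. split; [trivial |].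
  intros _. apply JI, EJ. exact Logic.I.
Qed.

Lemma minimal_interior_ideals_disjoint {T : Type} (op : T -> T -> T) (I J : T -> Prop) :
  minimal_interior_ideal op I -> minimal_interior_ideal op J ->
  ~ set_eq I J -> forall x, ~ (I x /\ J x).
Proof.
  intros [HI MI] [HJ MJ] NE x [Ix Jx].
  pose proof (interior_ideal_setI op I J x HI HJ Ix Jx) as HIJ.
  apply NE, (set_eq_trans _ (fun y => I y /\ J y)).
  - apply set_eq_sym, MI; [exact HIJ | intros y []; assumption].
  - apply MJ; [exact HIJ | intros y []; assumption].
Qed.

Lemma minimal_of_disjoint_proper {T : Type} (op : T -> T -> T) (I : T -> Prop) :
  (forall J, interior_ideal op J -> proper J ->
     ~ set_eq J I -> forall x, ~ (J x /\ I x)) ->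
  interior_ideal op I -> proper I -> minimal_interior_ideal op I.
Proof.
  intros Hdisj HI PI. split; [exact HI |].
  intros J HJ JI. apply NNPP. intro NE.
  destruct (proj1 (proj1 HJ)) as [x Jx].
  apply (Hdisj J HJ (proper_subset I J JI PI) NE x).
  split; [| apply JI]; exact Jx.
Qed.

Theorem mainTheorem15 (T : Type) (op : T -> T -> T) (Hassoc : associative_op op) :
  (forall I : T -> Prop,
      interior_ideal op I -> proper I -> minimal_interior_ideal op I)
  <->
  (forall I J : T -> Prop,
      interior_ideal op I -> proper I ->
      interior_ideal op J -> proper J ->
      ~ set_eq I J ->
      forall x, ~ (I x /\ J x)).
Proof.
  split.
  - intros Hmin I J HI PI HJ PJ.
    apply (minimal_interior_ideals_disjoint op); auto.
  - intros Hdisj I HI PI.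
    apply minimal_of_disjoint_proper; [| exact HI | exact PI].
    intros J HJ PJ. apply Hdisj; assumption.
Qed.
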